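(* Let $(\varepsilon_i)_{i\ge0}$ and $(\varepsilon'_i)_{i\ge0}$ belong to $\mathcal{D}^\infty$. Then $$\Big|\sum_{i=0}^{\infty}(\varepsilon_i-\varepsilon'_i)\beta_2^i\Big|\le\frac{1}{1+\beta_2},\qquad \Big|\sum_{i=0}^{\infty}(\varepsilon_i-\varepsilon'_i)\beta_3^i\Big|\le\frac{C}{1-|\beta_3|^6},$$ where $C=\max\{|\sum_{i=0}^5(c_i-d_i)\beta_3^i| : (c_i)_{0\le i\le5},(d_i)_{0\le i\le5}\in\mathcal{D}\}$.
   Context: Let $P(x)=x^4-x^3-x^2-x-1$. Its roots are $\beta_1\approx 1.9275$, a real root $\beta_2\approx-0.7748$, and a pair of complex conjugate roots $\beta_3\approx-0.0763+0.8147i$ and $\overline{\beta_3}$. $\mathcal{D}$ denotes the set of finite $0/1$ words containing no four consecutive $1$'s, and $\mathcal{D}^\infty$ the set of sequences $(\varepsilon_i)_{i\ge l}$, $l\in\mathbb{Z}$, with $\varepsilon_i\in\{0,1\}$ and containing no four consecutive $1$'s. *)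

From Stdlib Require Import Reals List.
From Coquelicot Require Import Coquelicot.
Open Scope R_scope.

Definition P_R (x : R) : R := x^4 - x^3 - x^2 - x - 1.
Definition P_C (z : C) : C :=
  (pow_n (K:=C_Ring) z 4 - pow_n (K:=C_Ring) z 3 - pow_n (K:=C_Ring) z 2 - z - 1)%C.

Definition b2R (b : bool) : R := if b then 1 else 0.
Definition b2C (b : bool) : C := RtoC (b2R b).

Definition in_Dinf (e : nat -> bool) : Prop :=
  forall i, ~ (e i = true /\ e (i+1)%nat = true /\ e (i+2)%nat = true /\ e (i+3)%nat = true).

Fixpoint no4 (w : list bool) : bool :=
  match w with
  | true :: true :: true :: true :: _ => false
  | _ :: t => no4 t
  | nil => true
  end.

Fixpoint words (n : nat) : list (list bool) :=
  match n with
  | O => nil :: nil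
  | S m => map (cons false) (words m) ++ map (cons true) (words m)
  end.

Definition Dwords (n : nat) : list (list bool) := filter no4 (words n).

Definition wsum (c d : list bool) (z : C) : C :=
  fold_right Cplus 0%C
    (map (fun i => Cmult (b2C (nth i c false) - b2C (nth i d false))%C (pow_n (K:=C_Ring) z i))
         (seq 0 (length c))).

(* C = max { |sum_{i=0}^5 (c_i - d_i) z^i| : c, d in D of length 6 }
   (the set is nonempty and the values are >= 0, so starting the fold at 0 is harmless) *)
Definition Cmax6 (z : C) : R :=
  fold_right Rmax 0
    (flat_map (fun c => map (fun d => Cmod (wsum c d z)) (Dwords 6)) (Dwords 6)).

From Stdlib Require Import Reals List Lia Lra Psatz.
From Coquelicot Require Import Coquelicot.
Open Scope R_scope.

(* Both bounds compare the series with a geometric one.  Since P(-1) = 1 > 0,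
   beta2 lies in (-1, 0), and the digit differences lie in [-1, 1], so the first
   series is dominated by the sum of |beta2|^i = 1/(1 + beta2).  The nonreal root
   beta3 has modulus < 1; cutting the second series into blocks of six digits,
   the k-th block is beta3^(6k) times a sum over two words of D of length 6,
   hence has modulus at most C |beta3|^(6k), and summing over k gives the bound. *)

Lemma P_R_neg_root_gt_m1 (x : R) : P_R x = 0 -> x < 0 -> -1 < x.
Proof.
  unfold P_R; intros Hx Hneg.
  destruct (Rle_or_lt x (-1)) as [Hle | Hlt]; [nra | exact Hlt].
Qed.

Lemma P_C_nonreal_root_Cmod_lt_1 (z : C) : P_C z = 0%C -> Im z <> 0 -> Cmod z < 1.
Proof.
  destruct z as [a b]; unfold P_C, Im, Cmod; simpl; intros Hz Hb.
  injection Hz as Hre Him; ring_simplify in Hre; ring_simplify in Him.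
  assert (Him' : 4*a^3 - 4*a*b^2 - 3*a^2 + b^2 - 2*a - 1 = 0).
  { apply (Rmult_eq_reg_l b); [nra | exact Hb]. }
  set (s := a^2 + b^2).
  (* P = (x^2 - 2a x + s) (x^2 + (2a - 1) x + 4a^2 - 2a - s - 1): compare the
     constant and linear coefficients. *)
  assert (E1 : s*(4*a^2 - 2*a - s - 1) = -1) by (unfold s; nra).
  assert (E2 : -2*a*(4*a^2 - 2*a - s - 1) + s*(2*a - 1) = -1) by (unfold s; nra).
  replace (a*(a*1) + b*(b*1)) with s by (unfold s; ring).
  rewrite <- sqrt_1; apply sqrt_lt_1_alt; split; [unfold s; nra |].
  destruct (Rlt_or_le s 1) as [Hs | Hs]; [exact Hs | exfalso].
  assert (Ea : 2*a*(1 + s^2) = s^2 - s) by nra.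
  assert (a >= 0) by nra.
  assert (2*a < 1) by nra.
  nra.
Qed.

Lemma Rabs_b2R_sub_le1 (x y : bool) : Rabs (b2R x - b2R y) <= 1.
Proof. destruct x, y; unfold b2R; apply Rabs_le; lra. Qed.

Lemma Cmod_b2C_sub_le1 (x y : bool) : Cmod (b2C x - b2C y)%C <= 1.
Proof. unfold b2C; rewrite <- RtoC_minus, Cmod_R; apply Rabs_b2R_sub_le1. Qed.

Lemma sum_n_geom_le (q : R) (N : nat) :
  0 <= q < 1 -> sum_n (fun k => q ^ k) N <= / (1 - q).
Proof.
  intros Hq; rewrite sum_n_Reals, tech3 by lra.
  assert (0 <= q ^ S N) by (apply pow_le; lra).
  unfold Rdiv; rewrite <- (Rmult_1_l (/ (1 - q))) at 2.
  apply Rmult_le_compat_r; [apply Rlt_le, Rinv_0_lt_compat |]; lra.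
Qed.

Section GeometricBounds.

Context {K : AbsRing}.

Lemma norm_sum_n_le_geom {V : NormedModule K} (b : nat -> V) (M q : R) (N : nat) :
  0 <= q < 1 -> (forall k, norm (b k) <= M * q ^ k) -> norm (sum_n b N) <= M / (1 - q).
Proof.
  intros Hq Hb.
  assert (HM : 0 <= M).
  { rewrite <- (Rmult_1_r M); apply Rle_trans with (2 := Hb 0%nat), norm_ge_0. }
  apply Rle_trans with (1 := norm_sum_n_m b 0 N).
  apply Rle_trans with (sum_n (fun k => M * q ^ k) N); [now apply sum_n_m_le |].
  change (sum_n (fun k => mult M (q ^ k)) N <= M / (1 - q)).
  rewrite sum_n_mult_l; apply Rmult_le_compat_l; [exact HM | now apply sum_n_geom_le].
Qed.

Lemma ex_series_le_geom {V : CompleteNormedModule K} (a : nat -> V) (r : R) :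
  0 <= r < 1 -> (forall n, norm (a n) <= r ^ n) -> ex_series a.
Proof.
  intros Hr Ha; apply (ex_series_le _ (fun n => r ^ n)); [exact Ha |].
  exists (/ (1 - r)); apply is_series_geom; rewrite Rabs_pos_eq; lra.
Qed.

Lemma norm_series_le_subseq {V : NormedModule K} (a : nat -> V) (l : V)
  (f : nat -> nat) (M : R) :
  is_series a l -> (forall N, (N <= f N)%nat) ->
  (forall N, norm (sum_n a (f N)) <= M) -> norm l <= M.
Proof.
  intros Hl Hf HM.
  assert (Hlim : filterlim f eventually eventually).
  { intros P [N0 HN]; exists N0; intros n Hn; apply HN; specialize (Hf n); lia. }
  apply (is_lim_seq_le (fun N => norm (sum_n a (f N))) (fun _ => M) (norm l) M HM).
  - exact (filterlim_comp _ _ _ _ _ _ _ _ (filterlim_comp _ _ _ _ _ _ _ _ Hlim Hl) (filterlim_norm l)).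
  - apply is_lim_seq_const.
Qed.

End GeometricBounds.

Lemma digit_series_R (q : R) (e e' : nat -> bool) : Rabs q < 1 ->
  exists l : R, is_series (fun i => (b2R (e i) - b2R (e' i)) * q ^ i) l
    /\ Rabs l <= / (1 - Rabs q).
Proof.
  intros Hq.
  set (a := fun i => (b2R (e i) - b2R (e' i)) * q ^ i).
  assert (Ha : forall n, norm (a n) <= Rabs q ^ n).
  { intros n; change (Rabs (a n) <= Rabs q ^ n); unfold a.
    rewrite Rabs_mult, <- RPow_abs; rewrite <- (Rmult_1_l (Rabs q ^ n)) at 2.
    apply Rmult_le_compat_r; [apply pow_le, Rabs_pos | apply Rabs_b2R_sub_le1]. }
  assert (Hq' : 0 <= Rabs q < 1) by (split; [apply Rabs_pos | exact Hq]).
  destruct (ex_series_le_geom (V := R_CompleteNormedModule) a (Rabs q) Hq' Ha) as [l Hl].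
  exists l; split; [exact Hl |].
  replace (/ (1 - Rabs q)) with (1 / (1 - Rabs q)) by (unfold Rdiv; ring).
  apply (norm_series_le_subseq a l (fun N => N)); [exact Hl | auto |].
  intros N; apply norm_sum_n_le_geom; [exact Hq' |].
  intros k; rewrite Rmult_1_l; apply Ha.
Qed.

Fixpoint window (e : nat -> bool) (k n : nat) : list bool :=
  match n with
  | O => nil
  | S n => e k :: window e (S k) n
  end.

Lemma window_length (e : nat -> bool) (k n : nat) : length (window e k n) = n.
Proof. revert k; induction n; intros k; simpl; auto. Qed.

Lemma firstn_window (e : nat -> bool) (k m n : nat) :
  firstn m (window e k n) = window e k (Nat.min m n).
Proof.
  revert k m; induction n; intros k [|m]; simpl; rewrite ?IHn; reflexivity.
Qed.

Lemma no4_cons (x : bool) (t : list bool) :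
  no4 t = true -> (x = true -> firstn 3 t <> true :: true :: true :: nil) ->
  no4 (x :: t) = true.
Proof.
  intros Ht Hx; destruct x; [| exact Ht].
  destruct t as [|[] [|[] [|[] t]]]; simpl in *; auto.
  now destruct (Hx eq_refl).
Qed.

Lemma no4_window (e : nat -> bool) (k n : nat) : in_Dinf e -> no4 (window e k n) = true.
Proof.
  intros he; revert k; induction n; intros k; [reflexivity |].
  simpl window; apply no4_cons; [apply IHn |].
  intros Hk Hfirst; rewrite firstn_window in Hfirst.
  destruct n as [|[|[|n]]]; simpl in Hfirst; try discriminate.
  injection Hfirst as H1 H2 H3; apply (he k).
  now rewrite Nat.add_1_r, <- !plus_n_Sm, Nat.add_0_r.
Qed.

Lemma In_words (l : list bool) : In l (words (length l)).
Proof.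
  induction l as [|x l IH]; simpl; [now left |].
  apply in_or_app; destruct x; [right | left]; now apply in_map.
Qed.

Lemma window_in_Dwords (e : nat -> bool) (k n : nat) :
  in_Dinf e -> In (window e k n) (Dwords n).
Proof.
  intros he; apply filter_In; split; [| now apply no4_window].
  rewrite <- (window_length e k n) at 2; apply In_words.
Qed.

Lemma fold_Rmax_in (l : list R) (x : R) : In x l -> x <= fold_right Rmax 0 l.
Proof.
  induction l as [|y l IH]; simpl; [tauto |].
  intros [<- | Hx]; [apply Rmax_l | eapply Rle_trans; [apply IH, Hx | apply Rmax_r]].
Qed.

Lemma Cmod_wsum_le_Cmax6 (c d : list bool) (z : C) :
  In c (Dwords 6) -> In d (Dwords 6) -> Cmod (wsum c d z) <= Cmax6 z.
Proof.
  intros Hc Hd; apply fold_Rmax_in, in_flat_map; exists c; split; [exact Hc |].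
  now apply (in_map (fun d => Cmod (wsum c d z))).
Qed.

Lemma sum_n_blocks {G : AbelianMonoid} (a : nat -> G) (m N : nat) :
  sum_n a (S m * N + m) = sum_n (fun k => sum_n_m a (S m * k) (S m * k + m)) N.
Proof.
  induction N as [|N IH].
  - now rewrite sum_O, Nat.mul_0_r.
  - rewrite sum_Sn, <- IH; unfold sum_n.
    rewrite (sum_n_m_Chasles a 0 (S m * N + m)) by lia.
    now replace (S (S m * N + m)) with (S m * S N)%nat by lia.
Qed.

Lemma sum_n_m_digit_block (e e' : nat -> bool) (z : C) (k : nat) :
  sum_n_m (fun i => Cmult (b2C (e i) - b2C (e' i))%C (pow_n (K := C_Ring) z i)) k (k + 5)
  = Cmult (pow_n (K := C_Ring) z k) (wsum (window e k 6) (window e' k 6) z).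
Proof.
  replace (k + 5)%nat with (S (S (S (S (S k))))) by lia.
  do 5 rewrite sum_Sn_m by lia; rewrite sum_n_n.
  unfold wsum; simpl; unfold plus, mult, one, zero; simpl.
  match goal with |- ?a = ?b => change (@eq C a b) end.
  ring.
Qed.

Lemma pow_n_Cpow (z : C) (n : nat) : pow_n (K := C_Ring) z n = Cpow z n.
Proof. induction n as [|n IH]; simpl; [reflexivity | now rewrite IH]. Qed.

Lemma norm_C (z : C) : norm (K := C_AbsRing) (V := C_NormedModule) z = Cmod z.
Proof. reflexivity. Qed.

Lemma digit_series_C (z : C) (e e' : nat -> bool) :
  Cmod z < 1 -> in_Dinf e -> in_Dinf e' ->
  exists l : C,
    is_series (V := C_NormedModule)
      (fun i => Cmult (b2C (e i) - b2C (e' i))%C (pow_n (K := C_Ring) z i)) l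
    /\ Cmod l <= Cmax6 z / (1 - Cmod z ^ 6).
Proof.
  intros Hz he he'.
  set (a := fun i => Cmult (b2C (e i) - b2C (e' i))%C (pow_n (K := C_Ring) z i)).
  set (r := Cmod z).
  assert (Hr : 0 <= r < 1) by (split; [apply Cmod_ge_0 | exact Hz]).
  assert (Hq : 0 <= r ^ 6 < 1).
  { split; [now apply pow_le | apply pow_lt_1_compat; [exact Hr | lia]]. }
  assert (Ha : forall n, norm (a n) <= r ^ n).
  { intros n; unfold a.
    rewrite norm_C, Cmod_mult, pow_n_Cpow, Cmod_pow, <- (Rmult_1_l (r ^ n)).
    apply Rmult_le_compat_r; [now apply pow_le | apply Cmod_b2C_sub_le1]. }
  destruct (ex_series_le_geom (V := C_CompleteNormedModule) a r Hr Ha) as [l Hl].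
  exists l; split; [exact Hl |].
  rewrite <- norm_C.
  apply (norm_series_le_subseq a l (fun N => 6 * N + 5)%nat); [exact Hl | intros; lia |].
  intros N; change (6 * N + 5)%nat with (S 5 * N + 5)%nat; rewrite sum_n_blocks.
  apply norm_sum_n_le_geom; [exact Hq |].
  intros k; unfold a; rewrite sum_n_m_digit_block, norm_C, Cmod_mult.
  rewrite pow_n_Cpow, Cmod_pow, <- pow_mult, Rmult_comm.
  apply Rmult_le_compat_r; [now apply pow_le |].
  apply Cmod_wsum_le_Cmax6; now apply window_in_Dwords.
Qed.

Theorem lemma3p2 (beta2 : R) (beta3 : C)
  (h2root : P_R beta2 = 0) (h2neg : beta2 < 0)
  (h3root : P_C beta3 = 0%C) (h3im : 0 < Im beta3)
  (e e' : nat -> bool) (he : in_Dinf e) (he' : in_Dinf e') :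
  (exists l : R,
      is_series (fun i => (b2R (e i) - b2R (e' i)) * beta2 ^ i) l
      /\ Rabs l <= 1 / (1 + beta2))
  /\
  (exists l : C,
      is_series (V:=C_NormedModule)
        (fun i => Cmult (b2C (e i) - b2C (e' i))%C (pow_n (K:=C_Ring) beta3 i)) l
      /\ Cmod l <= Cmax6 beta3 / (1 - Cmod beta3 ^ 6)).
Proof.
  split.
  - pose proof (P_R_neg_root_gt_m1 beta2 h2root h2neg) as Hgt.
    assert (Habs : Rabs beta2 = - beta2) by now apply Rabs_left.
    destruct (digit_series_R beta2 e e') as [l [Hl Hbound]]; [lra |].
    exists l; split; [exact Hl |].
    rewrite Habs in Hbound; replace (1 / (1 + beta2)) with (/ (1 - - beta2)) by (field; lra).
    exact Hbound.
  - apply digit_series_C; [| exact he | exact he'].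
    apply P_C_nonreal_root_Cmod_lt_1; [exact h3root | lra].
Qed.
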